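(* Let $\mathcal{G}=(G;T_1,T_2;\theta)$ and $\mathcal{G}'=(G';T_1',T_2';\theta')$ be symmetric $2$-tree decompositions such that $\mathcal{G}'$ is obtained from $\mathcal{G}$ by a symmetric $2$-tree $0$-extension. If $\mathcal{G}$ has a $\mathcal{C}_s$-realisation $(p,\tau)$ in the plane, then $\mathcal{G}'$ has a $\mathcal{C}_s$-realisation $(p',\tau)$ in the plane with $p'(w)=p(w)$ for all $w\in V(G)$.
   Context: A multi-graph is finite and loop-free, possibly with parallel edges. A $2$-tree decomposition is $(G;T_1,T_2)$ with $G$ a multi-graph and $T_1,T_2$ spanning trees of $G$ whose edge sets partition $E(G)$. Let $\mathbb{Z}_2=\langle s\rangle$. A $\mathbb{Z}_2$-symmetric multi-graph is $(G,\theta)$ with $\theta:\mathbb{Z}_2\to\mathrm{Aut}(G)$ a non-trivial homomorphism; $s_\theta=\theta(s)$, $s_\theta(v_1v_2)=s_\theta(v_1)s_\theta(v_2)$. A symmetric $2$-tree decomposition is $(G;T_1,T_2;\theta)$ with $(G;T_1,T_2)$ a $2$-tree decomposition, $(G,\theta)$ $\mathbb{Z}_2$-symmetric and $s_\theta(T_i)=T_i$. A symmetric $2$-tree $0$-extension produces $(G';T_1',T_2';\theta')$ from $(G;T_1,T_2;\theta)$ by adding two new distinct vertices $v,s_{\theta'}(v)$ with $s_{\theta'}|_{V(G)}=s_\theta$, adding an edge $vv_1$ to $T_1$ and an edge $vv_2$ to $T_2$ for some (not necessarily distinct) $v_1,v_2\in V(G)$, and adding their images $s_{\theta'}(vv_1)$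 to $T_1$ and $s_{\theta'}(vv_2)$ to $T_2$. Realisations: a framework $(G,p)$ in $\mathbb{R}^d$ is a multi-graph $G$ with an injective $p:V(G)\to\mathbb{R}^d$; $\|x\|_\infty=\max_i|x\cdot e_i|$. If $u,w$ are joined by exactly $t\ge1$ edges, $\{p(u),p(w)\}$ is well-positioned if there are exactly $t$ distinct indices $k$ with $\|p(u)-p(w)\|_\infty=|(p(u)-p(w))\cdot e_k|$ (its framework colours); $(G,p)$ is well-positioned if all adjacent pairs are; a framework colouring $\kappa_p$ assigns to the $t$ edges between $u,w$ these $t$ colours bijectively. A realisation of $(G;T_1,\dots,T_d)$ is a well-positioned $(G,p)$ in $\mathbb{R}^d$ with $\kappa_p^{-1}(i)=E(T_i)$ for all $i$, for some framework colouring. A $\mathcal{C}_s$-realisation of a symmetric $2$-tree decomposition $(G;T_1,T_2;\theta)$ is a pair $(p,\tau)$ where $p:V(G)\to\mathbb{R}^2$ is injective, $\tau:\mathbb{Z}_2\to GL(\mathbb{R}^2)$ is a representation with $\tau(s)$ a reflection in a coordinate axis, $\tau(s)(p(v))=p(s_\theta(v))$ for all $v$, and $(G,p)$ is a realisation of $(G;T_1,T_2)$. *)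

From mathcomp Require Import all_boot.
From Stdlib Require Import Reals.

Set Implicit Arguments.
Unset Strict Implicit.
Unset Printing Implicit Defensive.

(* A multigraph: finite vertex type V, finite edge type E, and an endpoint
   map [ends : E -> V * V] (the order of the pair is irrelevant: edges are
   undirected; see [joins]). *)

Section Graphs.
Variables (V E : finType) (ends : E -> V * V).

Definition loopless : Prop := forall e, (ends e).1 != (ends e).2.

Definition joins (e : E) (x y : V) : bool :=
  (ends e == (x, y)) || (ends e == (y, x)).

Definition between (x y : V) : {set E} := [set e | joins e x y].

Fixpoint walk (T : {set E}) (x : V) (s : seq E) (y : V) : bool :=
  match s with
  | [::] => x == y
  | e :: s' =>
      (e \in T) &&
      (((ends e).1 == x) && walk T (ends e).2 s' y
       || ((ends e).2 == x) && walk T (ends e).1 s' y)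
  end.

Definition connected_sub (T : {set E}) : Prop :=
  forall x y : V, exists s, walk T x s y.

(* acyclic: no nonempty closed walk with pairwise distinct edges
   (closed trail); in a multigraph two parallel edges form a cycle. *)
Definition acyclic_sub (T : {set E}) : Prop :=
  forall (x : V) (s : seq E), walk T x s x -> uniq s -> s = [::].

Definition spanning_tree (T : {set E}) : Prop :=
  connected_sub T /\ acyclic_sub T.

Definition two_tree_dec (T1 T2 : {set E}) : Prop :=
  loopless /\ T1 :&: T2 = set0 /\ T1 :|: T2 = setT /\
  spanning_tree T1 /\ spanning_tree T2.

Definition is_aut (sV : V -> V) (sE : E -> E) : Prop :=
  bijective sV /\ bijective sE /\
  forall e, joins (sE e) (sV (ends e).1) (sV (ends e).2).

(* Z2-symmetric multigraph (G, theta): theta(s) = (sV, sE) is an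
   automorphism with theta(s)^2 = id, and theta is non-trivial. *)
Definition Z2_symmetric (sV : V -> V) (sE : E -> E) : Prop :=
  is_aut sV sE /\ (forall x, sV (sV x) = x) /\ (forall e, sE (sE e) = e) /\
  ~ ((forall x, sV x = x) /\ (forall e, sE e = e)).

Definition sym_two_tree_dec (T1 T2 : {set E}) (sV : V -> V) (sE : E -> E)
  : Prop :=
  two_tree_dec T1 T2 /\ Z2_symmetric sV sE /\
  sE @: T1 = T1 /\ sE @: T2 = T2.

End Graphs.

(* (G';T1',T2';theta') is obtained from (G;T1,T2;theta) by a symmetric
   2-tree 0-extension, where G is identified with a subgraph of G' via the
   injections iV : V -> V', iE : E -> E' (preserving incidence). *)
Definition zero_ext (V E V' E' : finType)
  (ends : E -> V * V) (T1 T2 : {set E}) (sV : V -> V)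
  (ends' : E' -> V' * V') (T1' T2' : {set E'}) (sV' : V' -> V') (sE' : E' -> E')
  (iV : V -> V') (iE : E -> E') : Prop :=
  injective iV /\ injective iE /\
  (forall e, joins ends' (iE e) (iV (ends e).1) (iV (ends e).2)) /\
  (forall x, sV' (iV x) = iV (sV x)) /\
  exists (v : V') (v1 v2 : V) (a1 a2 : E'),
    v \notin codom iV /\ sV' v \notin codom iV /\ v != sV' v /\
    (forall x : V', [|| x \in codom iV, x == v | x == sV' v]) /\
    uniq [:: a1; a2; sE' a1; sE' a2] /\
    all (fun a => a \notin codom iE) [:: a1; a2; sE' a1; sE' a2] /\
    (forall f : E', (f \in codom iE) || (f \in [:: a1; a2; sE' a1; sE' a2])) /\
    joins ends' a1 v (iV v1) /\ joins ends' a2 v (iV v2) /\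
    T1' = iE @: T1 :|: [set a1; sE' a1] /\
    T2' = iE @: T2 :|: [set a2; sE' a2].

Definition point := (R * R)%type.

Definition coord (x : point) (k : 'I_2) : R :=
  if val k == 0%N then x.1 else x.2.

Definition infdist (x y : point) : R :=
  Rmax (Rabs (Rminus x.1 y.1)) (Rabs (Rminus x.2 y.2)).

Definition Reqb (a b : R) : bool := if Req_EM_T a b then true else false.

Section Realisations.
Variables (V E : finType) (ends : E -> V * V).

Definition fcols (p : V -> point) (x y : V) : {set 'I_2} :=
  [set k | Reqb (Rabs (Rminus (coord (p x) k) (coord (p y) k)))
                (infdist (p x) (p y))].

Definition well_positioned (p : V -> point) : Prop :=
  forall x y : V, between ends x y != set0 ->
    #|fcols p x y| = #|between ends x y|.

Definition framework_colouring (p : V -> point) (kappa : E -> 'I_2) : Prop :=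
  forall x y : V, between ends x y != set0 ->
    {in between ends x y &, injective kappa} /\
    kappa @: between ends x y = fcols p x y.

Definition realisation (T1 T2 : {set E}) (p : V -> point) : Prop :=
  injective p /\ well_positioned p /\
  exists kappa : E -> 'I_2, framework_colouring p kappa /\
    [set e | kappa e == ord0] = T1 /\ [set e | kappa e == ord_max] = T2.

Definition refl (k : 'I_2) (x : point) : point :=
  if val k == 0%N then (Ropp x.1, x.2) else (x.1, Ropp x.2).

(* C_s-realisation (p, tau) of (G;T1,T2;theta); tau is determined by
   tau_s = tau(s), which must be a reflection in a coordinate axis. *)
Definition Cs_realisation (T1 T2 : {set E}) (sV : V -> V)
  (p : V -> point) (tau_s : point -> point) : Prop :=
  (exists k : 'I_2, forall x, tau_s x = refl k x) /\
  injective p /\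
  (forall v, tau_s (p v) = p (sV v)) /\
  realisation T1 T2 p.

End Realisations.

From mathcomp Require Import all_boot.
From Stdlib Require Import Reals Lra.

(* Keep p on the old vertices, send the new vertex v to a point q and its
   mirror image s(v) to tau(q), where tau = refl k is the reflection of the
   realisation.  The point q is chosen
   - off both coordinate axes, so that q <> tau(q);
   - away from the finitely many points p(w), so that p' is injective;
   - so that {q, p(v1)} has exactly the colour 1 and {q, p(v2)} exactly the
     colour 2 (or both colours when v1 = v2, the two new edges being parallel).
   Such a q exists on a short segment issuing from p(v1) or from the corner
   point with the abscissa of p(v2) and the ordinate of p(v1).  Since
   reflections preserve framework colours, s(v) then automatically satisfies
   the mirrored conditions. *)

Set Implicit Arguments.
Unset Strict Implicit.
Unset Printing Implicit Defensive.

Local Open Scope R_scope.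

Definition colours (P Q : point) : {set 'I_2} :=
  [set k | Reqb (Rabs (coord P k - coord Q k)) (infdist P Q)].

Lemma ord2_cases (k : 'I_2) : k = ord0 \/ k = ord_max.
Proof. by case: k => [[|[|m]] Hm]; [left|right|] => //; apply/val_inj. Qed.

Lemma colours_horizontal P Q :
  Rabs (P.1 - Q.1) > Rabs (P.2 - Q.2) -> colours P Q = [set ord0].
Proof.
move=> H; apply/setP => k; rewrite !inE /Reqb /infdist Rmax_left; last lra.
by case: (ord2_cases k) => ->; rewrite /coord /=; case: Req_EM_T => // ?; lra.
Qed.

Lemma colours_vertical P Q :
  Rabs (P.2 - Q.2) > Rabs (P.1 - Q.1) -> colours P Q = [set ord_max].
Proof.
move=> H; apply/setP => k; rewrite !inE /Reqb /infdist Rmax_right; last lra.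
by case: (ord2_cases k) => ->; rewrite /coord /=; case: Req_EM_T => // ?; lra.
Qed.

Lemma colours_diagonal P Q :
  Rabs (P.1 - Q.1) = Rabs (P.2 - Q.2) -> colours P Q = setT.
Proof.
move=> H; apply/setP => k; rewrite !inE /Reqb /infdist Rmax_left; last lra.
by case: (ord2_cases k) => ->; rewrite /coord /=; case: Req_EM_T => // ?; lra.
Qed.

Lemma colours_sym P Q : colours P Q = colours Q P.
Proof.
apply/setP => k; rewrite !inE /infdist.
by rewrite (Rabs_minus_sym (coord P k)) (Rabs_minus_sym P.1) (Rabs_minus_sym P.2).
Qed.

Lemma refl_involutive k P : refl k (refl k P) = P.
Proof.
by rewrite /refl; case: (val k == 0%nat); case: P => a b /=; rewrite Ropp_involutive.
Qed.

(* A reflection in a coordinate axis is an isometry for every coordinate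
   distance, hence preserves framework colours. *)
Lemma colours_refl k P Q : colours (refl k P) (refl k Q) = colours P Q.
Proof.
have dist_refl j :
    Rabs (coord (refl k P) j - coord (refl k Q) j) = Rabs (coord P j - coord Q j).
  rewrite /refl /coord; case: (val k == 0%nat); case: (val j == 0%nat) => //=;
    by rewrite -Rabs_Ropp; congr Rabs; ring.
apply/setP => j; rewrite !inE dist_refl /infdist.
by have := dist_refl ord0; have := dist_refl ord_max; rewrite /coord /= => -> ->.
Qed.

Lemma refl_moves k q : q.1 <> 0 -> q.2 <> 0 -> q <> refl k q.
Proof.
move=> q1 q2; rewrite /refl; case: (val k == 0%nat) => E.
- by have /= := f_equal fst E; lra.
- by have /= := f_equal snd E; lra.
Qed.

(* The colour requirements on the position q of a new vertex joined by an
   edge of colour 1 to a point P1 and an edge of colour 2 to P2 (the two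
   edges being parallel when [same] holds). *)
Definition attachable (q P1 P2 : point) (same : bool) : Prop :=
  if same then colours q P1 = setT
  else colours q P1 = [set ord0] /\ colours q P2 = [set ord_max].

Lemma attachable_refl k q P1 P2 same :
  attachable q P1 P2 same -> attachable (refl k q) (refl k P1) (refl k P2) same.
Proof. by rewrite /attachable !colours_refl. Qed.

Lemma avoid_finite (I : finType) (f : I -> R) lo hi :
  lo < hi -> exists t, lo < t < hi /\ forall i, t <> f i.
Proof.
move=> lo_hi.
have avoid_seq (s : seq I) a b : a < b ->
    exists t, a < t < b /\ forall i, i \in s -> t <> f i.
  elim: s a b => [|j s IH] a b ab; first by exists ((a + b) / 2); split; [lra|].
  have [t [Ht Hs]] : exists t, (a < t < b /\ t <> f j) /\
      forall i, i \in s -> t <> f i.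
    case: (Rle_dec (f j) ((a + b) / 2)) => [fj|/Rnot_le_lt fj].
    - have [t [Ht Hs]] := IH ((a + b) / 2) b ltac:(lra).
      by exists t; split; first lra.
    - have [t [Ht Hs]] := IH a ((a + b) / 2) ltac:(lra).
      by exists t; split; first lra.
  exists t; split; first by case: Ht.
  by move=> i; rewrite inE => /predU1P [->|/Hs]; [case: Ht|].
have [t [Ht Hs]] := avoid_seq (enum I) lo hi lo_hi.
by exists t; split=> // i; apply: Hs; rewrite mem_enum.
Qed.

Lemma generic_point_on_ray (V : finType) (p : V -> point) a b g d h
    (G : point -> Prop) :
  g <> 0 -> d <> 0 -> 0 < h ->
  (forall t, 0 < t < h -> G (a + g * t, b + d * t)) ->
  exists q : point, [/\ q.1 <> 0, q.2 <> 0, forall w, q <> p w & G q].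
Proof.
move=> g0 d0 h0 HG.
(* parameters where the ray meets an axis or the vertical line through a p w *)
pose forbidden (i : option (option V)) := match i with
  | None => - a / g | Some None => - b / d | Some (Some w) => ((p w).1 - a) / g end.
have [t [Ht Hf]] := avoid_finite forbidden h0.
exists (a + g * t, b + d * t); split=> /= [E|E|w E|]; last exact: HG.
- by apply: (Hf None) => /=; field_simplify_eq; lra.
- by apply: (Hf (Some None)) => /=; field_simplify_eq; lra.
- by apply: (Hf (Some (Some w))); rewrite /= -E /=; field_simplify_eq; lra.
Qed.

Lemma attachable_point (V : finType) (p : V -> point) (P1 P2 : point) same :
  (~~ same -> P1 <> P2) ->
  exists q : point,
    [/\ q.1 <> 0, q.2 <> 0, forall w, q <> p w & attachable q P1 P2 same].
Proof.
case: P1 P2 => a b [c d]; rewrite /attachable.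
case: same => [_|/(_ isT) P12]; first
  by apply: (generic_point_on_ray p (a := a) (b := b) (g := 1) (d := 1) (h := 1)); try lra;
     move=> t _; apply: colours_diagonal => /=; congr Rabs; ring.
have [ac|ac] := Req_EM_T a c.
  subst c.
  have bd : 0 < Rabs (b - d).
    by apply: Rabs_pos_lt => bd; apply: P12; congr pair; lra.
  apply: (generic_point_on_ray p (a := a) (b := b) (g := 1) (d := 1/2)
            (h := Rabs (b - d) / 2)); try lra.
  by move=> t Ht; split; [apply: colours_horizontal | apply: colours_vertical];
    move: Ht bd => /=; rewrite /Rabs; repeat case: Rcase_abs; lra.
have ca : 0 < Rabs (c - a) by apply: Rabs_pos_lt; lra.
have [bd|bd] := Req_EM_T b d.
  subst d.
  apply: (generic_point_on_ray p (a := c) (b := b) (g := 1/2) (d := 1)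
            (h := Rabs (c - a) / 2)); try lra.
  by move=> t Ht; split; [apply: colours_horizontal | apply: colours_vertical];
    move: Ht ca => /=; rewrite /Rabs; repeat case: Rcase_abs; lra.
have bd' : 0 < Rabs (b - d) by apply: Rabs_pos_lt; lra.
have m_pos := Rmin_glb_lt _ _ _ ca bd'.
have m_l := Rmin_l (Rabs (c - a)) (Rabs (b - d)).
have m_r := Rmin_r (Rabs (c - a)) (Rabs (b - d)).
apply: (generic_point_on_ray p (a := c) (b := b) (g := 1/2) (d := 1)
          (h := Rmin (Rabs (c - a)) (Rabs (b - d)) / 2)); try lra.
by move=> t Ht; split; [apply: colours_horizontal | apply: colours_vertical];
  move: Ht m_l m_r => /=; rewrite /Rabs; repeat case: Rcase_abs; lra.
Qed.

Local Close Scope R_scope.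

Section Incidence.
Variables (V E : finType) (ends : E -> V * V).

Lemma joins_sym e x y : joins ends e x y = joins ends e y x.
Proof. by rewrite /joins orbC. Qed.

Lemma between_sym x y : between ends x y = between ends y x.
Proof. by apply/setP => e; rewrite !inE joins_sym. Qed.

Lemma joinsE f u1 u2 x y : joins ends f u1 u2 ->
  joins ends f x y = ((x == u1) && (y == u2)) || ((x == u2) && (y == u1)).
Proof.
rewrite /joins => /orP [] /eqP ->; rewrite !xpair_eqE.
all: by rewrite ?(eq_sym u1) ?(eq_sym u2);
  case: (x == u1); case: (y == u2); case: (x == u2); case: (y == u1).
Qed.

Lemma joins_ends e : joins ends e (ends e).1 (ends e).2.
Proof. by rewrite /joins; case: (ends e) => a b; rewrite eqxx. Qed.

Lemma joins_aut (sE : E -> E) (sV : V -> V) f x y :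
  (forall e, joins ends (sE e) (sV (ends e).1) (sV (ends e).2)) ->
  joins ends f x y -> joins ends (sE f) (sV x) (sV y).
Proof.
move=> aut; have := aut f; rewrite /joins => aut_f /orP [] /eqP ends_f.
  by rewrite ends_f in aut_f.
by rewrite ends_f /= orbC in aut_f.
Qed.

Definition colouring_at (p : V -> point) (kap : E -> 'I_2) (x y : V) : Prop :=
  between ends x y != set0 ->
  {in between ends x y &, injective kap} /\ kap @: between ends x y = fcols p x y.

Lemma colouring_atC p kap x y : colouring_at p kap x y -> colouring_at p kap y x.
Proof.
have fcolsC : fcols p x y = fcols p y x := colours_sym (p x) (p y).
by rewrite /colouring_at between_sym fcolsC.
Qed.

Lemma colouring_well_positioned p kap :
  framework_colouring ends p kap -> well_positioned ends p.
Proof. by move=> col x y /(col x y) [inj <-]; rewrite (card_in_imset inj). Qed.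

Lemma colouring_at_new_vertex (p : V -> point) (kap : E -> 'I_2) u y1 y2 b1 b2 :
  (forall y f, (f \in between ends u y) =
               ((y == y1) && (f == b1)) || ((y == y2) && (f == b2))) ->
  b1 != b2 -> kap b1 = ord0 -> kap b2 = ord_max ->
  attachable (p u) (p y1) (p y2) (y1 == y2) ->
  forall y, colouring_at p kap u y.
Proof.
move=> Bu b12 k1 k2 att y Bne; split.
  by move=> f g; rewrite !Bu => /orP [] /andP [_ /eqP ->] /orP [] /andP [_ /eqP ->] //;
    rewrite k1 k2 => /(congr1 val).
change (kap @: between ends u y = colours (p u) (p y)); rewrite /attachable in att.
have [y_1|y_1] := eqVneq y y1; have [y_2|y_2] := eqVneq y y2.
- have -> : between ends u y = [set b1; b2].
    by apply/setP => f; rewrite Bu !inE -y_1 -y_2 !eqxx.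
  move: att; rewrite -y_1 -y_2 eqxx => ->.
  rewrite imsetU1 imset_set1 k1 k2; apply/setP => j; rewrite !inE.
  by case: (ord2_cases j) => ->; rewrite eqxx ?orbT.
- have -> : between ends u y = [set b1].
    by apply/setP => f; rewrite Bu !inE -y_1 eqxx (negbTE y_2) orbF.
  by move: att; rewrite imset_set1 k1 -y_1 (negbTE y_2) => -[->].
- have -> : between ends u y = [set b2].
    by apply/setP => f; rewrite Bu !inE -y_2 eqxx (negbTE y_1).
  by move: att; rewrite imset_set1 k2 -y_2 eq_sym (negbTE y_1) => -[_ ->].
- by case/set0Pn: Bne => f; rewrite Bu (negbTE y_1) (negbTE y_2).
Qed.

End Incidence.

Lemma uniq4 (T : eqType) (x1 x2 x3 x4 : T) : uniq [:: x1; x2; x3; x4] ->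
  [/\ x1 != x2, x1 != x3, x1 != x4 & [/\ x2 != x3, x2 != x4 & x3 != x4]].
Proof.
by rewrite /= !inE !negb_or => /and4P [/and3P [? ? ?] /andP [? ?] ? _].
Qed.

Definition extend (A B : finType) (C : Type) (i : A -> B) (f : A -> C) (g : B -> C)
  (x : B) : C :=
  if [pick a | i a == x] is Some a then f a else g x.

Lemma extend_old (A B : finType) (C : Type) (i : A -> B) (f : A -> C) g a :
  injective i -> extend i f g (i a) = f a.
Proof.
move=> i_inj; rewrite /extend; case: pickP => [a' /eqP /i_inj -> //|].
by move/(_ a); rewrite eqxx.
Qed.

Lemma extend_new (A B : finType) (C : Type) (i : A -> B) (f : A -> C) g x :
  x \notin codom i -> extend i f g x = g x.
Proof.
by move=> x_new; rewrite /extend; case: pickP => // a /eqP ia; rewrite -ia codom_f in x_new.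
Qed.

Lemma notin_codom_neq (A B : finType) (i : A -> B) x a :
  x \notin codom i -> (x == i a) = false.
Proof. by move=> x_new; apply/eqP => E; rewrite E codom_f in x_new. Qed.

Lemma notin_codom_neqC (A B : finType) (i : A -> B) x a :
  x \notin codom i -> (i a == x) = false.
Proof. by move=> x_new; rewrite eq_sym notin_codom_neq. Qed.

Lemma notin_codom_imset (A B : finType) (i : A -> B) (D : {set A}) x :
  x \notin codom i -> (x \in i @: D) = false.
Proof. by move=> x_new; apply/imsetP => -[a _ xa]; rewrite xa codom_f in x_new. Qed.

Section NewEdges.
Variables (V E V' E' : finType) (ends : E -> V * V) (ends' : E' -> V' * V').
Variables (iV : V -> V') (iE : E -> E').
Hypothesis iV_inj : injective iV.
Hypothesis iE_inj : injective iE.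
Hypothesis iE_joins : forall e, joins ends' (iE e) (iV (ends e).1) (iV (ends e).2).
Variables (u u' : V') (y1 y2 z1 z2 : V) (b1 b2 c1 c2 : E').
Hypotheses (u_new : u \notin codom iV) (u'_new : u' \notin codom iV) (u_u' : u != u').
Hypothesis new_uniq : uniq [:: b1; b2; c1; c2].
Hypothesis new_notin : {in [:: b1; b2; c1; c2], forall f, f \notin codom iE}.
Hypothesis edge_cover : forall f, (f \in codom iE) || (f \in [:: b1; b2; c1; c2]).
Hypotheses (b1_joins : joins ends' b1 u (iV y1)) (b2_joins : joins ends' b2 u (iV y2)).
Hypotheses (c1_joins : joins ends' c1 u' (iV z1)) (c2_joins : joins ends' c2 u' (iV z2)).

Lemma edge_cases f : (exists e, f = iE e) \/ [\/ f = b1, f = b2, f = c1 | f = c2].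
Proof.
case/orP: (edge_cover f) => [/codomP [e ->]|]; first by left; exists e.
by rewrite !inE => /or4P [] /eqP ->; right; [apply: Or41|apply: Or42|apply: Or43|apply: Or44].
Qed.

Lemma between_old x y : between ends' (iV x) (iV y) = iE @: between ends x y.
Proof.
apply/setP => f; rewrite inE.
case: (edge_cases f) => [[e ->]|[] ->].
- rewrite (joinsE _ _ (iE_joins e)) mem_imset // inE (joinsE _ _ (joins_ends _ e)).
  by rewrite !(inj_eq iV_inj).
- rewrite (joinsE _ _ b1_joins) notin_codom_imset ?new_notin ?inE ?eqxx ?orbT //.
  by rewrite !(notin_codom_neqC _ u_new) ?andbF.
- rewrite (joinsE _ _ b2_joins) notin_codom_imset ?new_notin ?inE ?eqxx ?orbT //.
  by rewrite !(notin_codom_neqC _ u_new) ?andbF.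
- rewrite (joinsE _ _ c1_joins) notin_codom_imset ?new_notin ?inE ?eqxx ?orbT //.
  by rewrite !(notin_codom_neqC _ u'_new) ?andbF.
- rewrite (joinsE _ _ c2_joins) notin_codom_imset ?new_notin ?inE ?eqxx ?orbT //.
  by rewrite !(notin_codom_neqC _ u'_new) ?andbF.
Qed.

Lemma between_new_vertex y f :
  (f \in between ends' u y) = ((y == iV y1) && (f == b1)) || ((y == iV y2) && (f == b2)).
Proof.
have [b12 b1c1 b1c2 [b2c1 b2c2 _]] := uniq4 new_uniq.
have old_neq e g : g \in [:: b1; b2; c1; c2] -> (iE e == g) = false.
  by move=> /new_notin g_new; rewrite eq_sym notin_codom_neq.
rewrite inE; case: (edge_cases f) => [[e ->]|[] ->].
- rewrite (joinsE _ _ (iE_joins e)) !(notin_codom_neq _ u_new).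
  by rewrite !old_neq ?inE ?eqxx ?orbT ?andbF.
- rewrite (joinsE _ _ b1_joins) !eqxx (notin_codom_neq _ u_new) (negbTE b12).
  by rewrite /= ?andbT ?andbF ?orbF.
- rewrite (joinsE _ _ b2_joins) !eqxx (notin_codom_neq _ u_new) (eq_sym b2).
  by rewrite (negbTE b12) /= ?andbT ?andbF orbF.
- rewrite (joinsE _ _ c1_joins) (notin_codom_neq _ u_new) (negbTE u_u').
  by rewrite !(eq_sym c1) (negbTE b1c1) (negbTE b2c1) !andbF.
- rewrite (joinsE _ _ c2_joins) (notin_codom_neq _ u_new) (negbTE u_u').
  by rewrite !(eq_sym c2) (negbTE b1c2) (negbTE b2c2) !andbF.
Qed.

End NewEdges.

Section Extension.
Variables (V E V' E' : finType) (ends : E -> V * V) (ends' : E' -> V' * V').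
Variables (T1 T2 : {set E}) (T1' T2' : {set E'}).
Variables (sV : V -> V) (sV' : V' -> V') (sE' : E' -> E') (iV : V -> V') (iE : E -> E').
Hypothesis sV_invol : forall x, sV (sV x) = x.
Hypothesis sV'_invol : forall x, sV' (sV' x) = x.
Hypothesis aut : forall e, joins ends' (sE' e) (sV' (ends' e).1) (sV' (ends' e).2).
Hypotheses (iV_inj : injective iV) (iE_inj : injective iE).
Hypothesis iE_joins : forall e, joins ends' (iE e) (iV (ends e).1) (iV (ends e).2).
Hypothesis sV'_iV : forall x, sV' (iV x) = iV (sV x).
Variables (v : V') (v1 v2 : V) (a1 a2 : E').
Hypotheses (v_new : v \notin codom iV) (sv_new : sV' v \notin codom iV) (v_sv : v != sV' v).
Hypothesis vertex_cover : forall x, [|| x \in codom iV, x == v | x == sV' v].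
Hypothesis new_uniq : uniq [:: a1; a2; sE' a1; sE' a2].
Hypothesis new_notin : {in [:: a1; a2; sE' a1; sE' a2], forall f, f \notin codom iE}.
Hypothesis edge_cover : forall f, (f \in codom iE) || (f \in [:: a1; a2; sE' a1; sE' a2]).
Hypotheses (a1_joins : joins ends' a1 v (iV v1)) (a2_joins : joins ends' a2 v (iV v2)).
Hypotheses (T1'_def : T1' = iE @: T1 :|: [set a1; sE' a1]).
Hypotheses (T2'_def : T2' = iE @: T2 :|: [set a2; sE' a2]).
Variables (k : 'I_2) (p : V -> point) (kappa : E -> 'I_2).
Hypotheses (p_inj : injective p) (p_sym : forall w, p (sV w) = refl k (p w)).
Hypothesis kappa_col : framework_colouring ends p kappa.
Hypotheses (kappa_T1 : [set e | kappa e == ord0] = T1).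
Hypotheses (kappa_T2 : [set e | kappa e == ord_max] = T2).
Variable q : point.
Hypotheses (q1 : q.1 <> 0%R) (q2 : q.2 <> 0%R) (q_notin : forall w, q <> p w).
Hypothesis q_att : attachable q (p v1) (p v2) (v1 == v2).

Let p' := extend iV p (fun x => if x == v then q else refl k q).
Let kap' := extend iE kappa (fun f => if (f == a1) || (f == sE' a1) then ord0 else ord_max).

Lemma p'_old w : p' (iV w) = p w. Proof. exact: extend_old. Qed.
Lemma p'_v : p' v = q. Proof. by rewrite /p' extend_new // eqxx. Qed.
Lemma p'_sv : p' (sV' v) = refl k q.
Proof. by rewrite /p' extend_new // eq_sym (negbTE v_sv). Qed.

Lemma vertex_cases x : (exists w, x = iV w) \/ x = v \/ x = sV' v.
Proof.
case/or3P: (vertex_cover x) => [/codomP [w ->]|/eqP->|/eqP->].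
- by left; exists w.
- by right; left.
- by right; right.
Qed.

Lemma p'_symmetric x : refl k (p' x) = p' (sV' x).
Proof.
case: (vertex_cases x) => [[w ->]|[->|->]].
- by rewrite sV'_iV !p'_old p_sym.
- by rewrite p'_v p'_sv.
- by rewrite sV'_invol p'_sv p'_v refl_involutive.
Qed.

(* q avoids the old points, hence so does its mirror image, and q differs
   from its mirror image since it lies off both axes. *)
Lemma p'_injective : injective p'.
Proof.
have mirror_notin w : refl k q <> p w.
  by move=> eq_w; have := @q_notin (sV w); rewrite p_sym -eq_w refl_involutive.
have q_mirror := refl_moves (k := k) q1 q2.
move=> x y; case: (vertex_cases x) => [[x0 ->]|[->|->]];
  case: (vertex_cases y) => [[y0 ->]|[->|->]];
  rewrite ?p'_old ?p'_v ?p'_sv // => eq_xy;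
  first [ by [] | by rewrite (p_inj eq_xy)
        | by case: (q_notin eq_xy) | by case: (q_notin (esym eq_xy))
        | by case: (mirror_notin _ eq_xy) | by case: (mirror_notin _ (esym eq_xy))
        | by case: (q_mirror eq_xy) | by case: (q_mirror (esym eq_xy)) ].
Qed.

Lemma kap'_old e : kap' (iE e) = kappa e. Proof. exact: extend_old. Qed.

Lemma kap'_new : [/\ kap' a1 = ord0, kap' a2 = ord_max, kap' (sE' a1) = ord0
                  & kap' (sE' a2) = ord_max].
Proof.
have [a12 a13 a14 [a23 a24 a34]] := uniq4 new_uniq.
rewrite /kap' !extend_new ?new_notin ?inE ?eqxx ?orbT //.
rewrite (eq_sym a2) (eq_sym (sE' a2) a1) (eq_sym (sE' a2) (sE' a1)).
by rewrite (negbTE a12) (negbTE a23) (negbTE a14) (negbTE a34).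
Qed.

Lemma mirror_joins i : joins ends' (sE' (if i then a1 else a2)) (sV' v)
                                   (iV (sV (if i then v1 else v2))).
Proof. by rewrite -sV'_iV; apply: joins_aut; case: i. Qed.

Lemma between_at_old x y : between ends' (iV x) (iV y) = iE @: between ends x y.
Proof.
exact: (between_old iV_inj iE_inj iE_joins v_new sv_new new_notin edge_cover
          a1_joins a2_joins (mirror_joins true) (mirror_joins false)).
Qed.

Lemma between_at_v y f : (f \in between ends' v y) =
  ((y == iV v1) && (f == a1)) || ((y == iV v2) && (f == a2)).
Proof.
exact: (between_new_vertex iE_joins v_new v_sv new_uniq new_notin edge_cover
          a1_joins a2_joins (mirror_joins true) (mirror_joins false)).
Qed.

Lemma between_at_sv y f : (f \in between ends' (sV' v) y) =
  ((y == iV (sV v1)) && (f == sE' a1)) || ((y == iV (sV v2)) && (f == sE' a2)).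
Proof.
have rot_mem g : (g \in [:: sE' a1; sE' a2; a1; a2]) = (g \in [:: a1; a2; sE' a1; sE' a2]).
  exact: (mem_rot 2 [:: a1; a2; sE' a1; sE' a2]).
apply: (between_new_vertex iE_joins sv_new _ _ _ _ (mirror_joins true)
          (mirror_joins false) a1_joins a2_joins).
- by rewrite eq_sym.
- by rewrite -(rot_uniq 2).
- by move=> g; rewrite rot_mem; apply: new_notin.
- by move=> g; rewrite rot_mem.
Qed.

(* Old pairs keep their colouring; at v the colours are correct by the choice
   of q, and at s(v) by reflecting that choice. *)
Lemma kap'_colouring : framework_colouring ends' p' kap'.
Proof.
have [a12 _ _ [_ _ a34]] := uniq4 new_uniq.
have [ka1 ka2 ksa1 ksa2] := kap'_new.
have col_old x0 y0 : colouring_at ends' p' kap' (iV x0) (iV y0).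
  rewrite /colouring_at between_at_old => Bne.
  have [inj img] : {in between ends x0 y0 &, injective kappa} /\
                   kappa @: between ends x0 y0 = fcols p x0 y0.
    by apply: kappa_col; apply: contraNneq Bne => ->; rewrite imset0.
  split.
    by move=> _ _ /imsetP [e1 He1 ->] /imsetP [e2 He2 ->]; rewrite !kap'_old => /inj ->.
  rewrite -imset_comp (eq_imset _ (g := kappa)); last by move=> e /=; rewrite kap'_old.
  by rewrite img /fcols !p'_old.
have col_v y : colouring_at ends' p' kap' v y.
  apply: (colouring_at_new_vertex between_at_v) => //.
  by rewrite p'_v !p'_old (inj_eq iV_inj).
have col_sv y : colouring_at ends' p' kap' (sV' v) y.
  apply: (colouring_at_new_vertex between_at_sv) => //.
  rewrite p'_sv !p'_old !(inj_eq iV_inj) (inj_eq (can_inj sV_invol)) !p_sym.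
  exact: attachable_refl.
move=> x y; case: (vertex_cases x) => [[x0 ->]|[->|->]]; [|exact: col_v|exact: col_sv].
case: (vertex_cases y) => [[y0 ->]|[->|->]]; first exact: col_old.
- by apply: colouring_atC; exact: col_v.
- by apply: colouring_atC; exact: col_sv.
Qed.

Lemma kap'_classes : [set f | kap' f == ord0] = T1' /\ [set f | kap' f == ord_max] = T2'.
Proof.
have [a12 a13 a14 [a23 a24 a34]] := uniq4 new_uniq.
have [ka1 ka2 ksa1 ksa2] := kap'_new.
have old_neq e g : g \in [:: a1; a2; sE' a1; sE' a2] -> (iE e == g) = false.
  by move=> /new_notin g_new; rewrite eq_sym notin_codom_neq.
rewrite T1'_def T2'_def -kappa_T1 -kappa_T2; split; apply/setP => f; rewrite !inE.
all: case: (edge_cases edge_cover f) => [[e ->]|[] ->].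
all: rewrite ?kap'_old ?mem_imset ?inE // ?old_neq ?inE ?eqxx ?orbT ?orbF //.
all: rewrite ?ka1 ?ka2 ?ksa1 ?ksa2 ?notin_codom_imset ?new_notin ?inE ?eqxx ?orbT //=.
all: by rewrite ?(eq_sym a2 a1) ?(eq_sym a2 (sE' a1)) ?(eq_sym (sE' a2) a1)
       ?(eq_sym (sE' a2) (sE' a1)) ?(eq_sym (sE' a1) a2)
       ?(negbTE a12) ?(negbTE a14) ?(negbTE a23) ?(negbTE a34).
Qed.

Lemma extension_realisation (tau_s : point -> point) :
  (forall x, tau_s x = refl k x) ->
  exists p'' : V' -> point,
    Cs_realisation ends' T1' T2' sV' p'' tau_s /\ (forall w, p'' (iV w) = p w).
Proof.
move=> tau_refl; exists p'; split; last exact: p'_old.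
have [K1 K2] := kap'_classes.
split; first by exists k.
split; first exact: p'_injective.
split; first by move=> x; rewrite tau_refl p'_symmetric.
split; first exact: p'_injective.
split; first exact: colouring_well_positioned kap'_colouring.
by exists kap'; split; first exact: kap'_colouring.
Qed.

End Extension.

Theorem proposition5p8
  (V E V' E' : finType)
  (ends : E -> V * V) (T1 T2 : {set E}) (sV : V -> V) (sE : E -> E)
  (ends' : E' -> V' * V') (T1' T2' : {set E'}) (sV' : V' -> V') (sE' : E' -> E')
  (iV : V -> V') (iE : E -> E')
  (HG : sym_two_tree_dec ends T1 T2 sV sE)
  (HG' : sym_two_tree_dec ends' T1' T2' sV' sE')
  (Hext : zero_ext ends T1 T2 sV ends' T1' T2' sV' sE' iV iE)
  (p : V -> point) (tau_s : point -> point)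
  (Hp : Cs_realisation ends T1 T2 sV p tau_s) :
  exists p' : V' -> point,
    Cs_realisation ends' T1' T2' sV' p' tau_s /\
    (forall w : V, p' (iV w) = p w).
Proof.
case: Hp => [[k tau_refl] [p_inj [p_tau [_ [_ [kappa [kappa_col [K1 K2]]]]]]]].
case: HG => _ [[_ [sV_invol _]] _].
case: HG' => _ [[[_ [_ aut]] [sV'_invol _]] _].
case: Hext => iV_inj [iE_inj [iE_joins [sV'_iV [v [v1 [v2 [a1 [a2 [v_new [sv_new
  [v_sv [Vcover [new_uniq [/allP new_notin [Ecover [a1_joins [a2_joins [T1'_def
  T2'_def]]]]]]]]]]]]]]]]]].
have p_sym w : p (sV w) = refl k (p w) by rewrite -tau_refl p_tau.
have v12_p : v1 != v2 -> p v1 <> p v2 by move=> /eqP v12 /p_inj.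
have [q [q1 q2 q_notin q_att]] := attachable_point p v12_p.
exact: (extension_realisation sV_invol sV'_invol aut iV_inj iE_inj iE_joins sV'_iV
  v_new sv_new v_sv Vcover new_uniq new_notin Ecover a1_joins a2_joins T1'_def
  T2'_def p_inj p_sym kappa_col K1 K2 q1 q2 q_notin q_att tau_refl).
Qed.
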